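(* Let $\partial:L_1\to L_0$ be a crossed module of Lie algebras. (i) For each $c\in L_1$, $(\partial(c),\xi_c)\in\mathbf Z_0(L_* )$, where $\xi_c(t)=-t\cdot c$. (ii) The linear map $\delta:L_1\to\mathbf Z_0(L_* )$, $\delta(c)=(\partial(c),\xi_c)$, together with the bilinear map $\mathbf Z_0(L_* )\times\mathbf Z_0(L_* )\to L_1$, $\{(x,\xi),(y,\eta)\}:=\xi(y)$, satisfies, for all $a\in L_1$, $u,v,w\in\mathbf Z_0(L_* )$: $\{\delta a,u\}+\{u,\delta a\}=0$, $\delta\{u,u\}=0$ and $\{u,\delta\{v,w\}\}+\{w,\delta\{u,v\}\}+\{v,\delta\{w,u\}\}=0$; hence (with $[u,v]:=\delta\{u,v\}$ on $\mathbf Z_0(L_* )$ and $[a,b]:=\{\delta a,\delta b\}$ on $L_1$) it is a braided crossed module of Lie algebras, called the centre $\mathbf Z_*(L_* )$ of $L_*$.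
   Context: All vector spaces over a field $k$ of characteristic $\neq2$. A crossed module of Lie algebras is a Lie algebra homomorphism $\partial:L_1\to L_0$ with an action $(x,a)\mapsto x\cdot a$ of $L_0$ on the Lie algebra $L_1$ (i.e. $[x,y]\cdot a=x\cdot(y\cdot a)-y\cdot(x\cdot a)$, $x\cdot[a,b]=[x\cdot a,b]+[a,x\cdot b]$) such that $\partial(x\cdot a)=[x,\partial a]$ and $\partial(a)\cdot b=[a,b]$. $\mathbf Z_0(L_* )$ is the vector space (under componentwise operations) of pairs $(x,\xi)$ with $x\in L_0$ and $\xi:L_0\to L_1$ a linear map such that for all $s,t\in L_0$, $a\in L_1$: $\partial\xi(t)=[x,t]$; $\xi(\partial a)=x\cdot a$; $\xi([s,t])=s\cdot\xi(t)-t\cdot\xi(s)$. A braided crossed module of Lie algebras is a Lie algebra homomorphism $\partial:M_1\to M_0$ with a bilinear map $\{-,-\}:M_0\times M_0\to M_1$ such that $\partial\{x,y\}=[x,y]$, $\{\partial a,\partial b\}=[a,b]$, $\{\partial a,x\}+\{x,\partial a\}=0$, $\{x,[y,z]\}+\{z,[x,y]\}+\{y,[z,x]\}=0$. *)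

From HB Require Import structures.
From mathcomp Require Import all_boot all_algebra.
From mathcomp Require Import functions.
Set Implicit Arguments. Unset Strict Implicit. Unset Printing Implicit Defensive.
Import GRing.Theory.
Local Open Scope ring_scope.

Definition lin (k : fieldType) (U V : lmodType k) (f : U -> V) : Prop :=
  forall (a : k) (x y : U), f (a *: x + y) = a *: f x + f y.

Definition subspace (k : fieldType) (V : lmodType k) (S : V -> Prop) : Prop :=
  S 0 /\ forall (a : k) x y, S x -> S y -> S (a *: x + y).

Definition bilinear_on (k : fieldType) (V W : lmodType k) (S : V -> Prop)
  (b : V -> V -> W) : Prop :=
  (forall (a : k) x y z, S x -> S y -> S z ->
      b (a *: x + y) z = a *: b x z + b y z) /\
  (forall (a : k) x y z, S x -> S y -> S z ->
      b z (a *: x + y) = a *: b z x + b z y).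

Definition lie_on (k : fieldType) (V : lmodType k) (S : V -> Prop)
  (br : V -> V -> V) : Prop :=
  [/\ subspace S,
      (forall x y, S x -> S y -> S (br x y)),
      bilinear_on S br,
      (forall x, S x -> br x x = 0) &
      (forall x y z, S x -> S y -> S z ->
          br x (br y z) + br y (br z x) + br z (br x y) = 0)].

Definition lie_alg (k : fieldType) (V : lmodType k) (br : V -> V -> V) : Prop :=
  lie_on (fun _ => True) br.

Definition crossed_module (k : fieldType) (L1 L0 : lmodType k)
  (br1 : L1 -> L1 -> L1) (br0 : L0 -> L0 -> L0)
  (d : L1 -> L0) (act : L0 -> L1 -> L1) : Prop :=
  [/\ lie_alg br1 /\ lie_alg br0,
      lin d /\ (forall a b, d (br1 a b) = br0 (d a) (d b)),
      (forall (a : k) x y z, act (a *: x + y) z = a *: act x z + act y z)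
        /\ (forall (a : k) x y z, act z (a *: x + y) = a *: act z x + act z y),
      (forall x y a, act (br0 x y) a = act x (act y a) - act y (act x a))
        /\ (forall x a b, act x (br1 a b) = br1 (act x a) b + br1 a (act x b)) &
      (forall x a, d (act x a) = br0 x (d a))
        /\ (forall a b, act (d a) b = br1 a b)].

Definition Z0 (k : fieldType) (L1 L0 : lmodType k)
  (br0 : L0 -> L0 -> L0) (d : L1 -> L0) (act : L0 -> L1 -> L1)
  (u : (L0 * (L0 -> L1))%type) : Prop :=
  [/\ lin u.2,
      (forall t, d (u.2 t) = br0 u.1 t),
      (forall a, u.2 (d a) = act u.1 a) &
      (forall s t, u.2 (br0 s t) = act s (u.2 t) - act t (u.2 s))].

Definition zdelta (k : fieldType) (L1 L0 : lmodType k)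
  (d : L1 -> L0) (act : L0 -> L1 -> L1) (c : L1) : (L0 * (L0 -> L1))%type :=
  (d c, fun t => - act t c).

Definition zbraid (k : fieldType) (L1 L0 : lmodType k)
  (u v : (L0 * (L0 -> L1))%type) : L1 := u.2 v.1.

Definition braided_xmod_on (k : fieldType) (M1 M0 : lmodType k)
  (S0 : M0 -> Prop) (br1 : M1 -> M1 -> M1) (br0 : M0 -> M0 -> M0)
  (d : M1 -> M0) (bb : M0 -> M0 -> M1) : Prop :=
  [/\ lie_alg br1, lie_on S0 br0,
      [/\ (forall a, S0 (d a)), lin d & (forall a b, d (br1 a b) = br0 (d a) (d b))],
      bilinear_on S0 bb &
      [/\ (forall x y, S0 x -> S0 y -> d (bb x y) = br0 x y),
          (forall a b, bb (d a) (d b) = br1 a b),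
          (forall a x, S0 x -> bb (d a) x + bb x (d a) = 0) &
          (forall x y z, S0 x -> S0 y -> S0 z ->
              bb x (br0 y z) + bb z (br0 x y) + bb y (br0 z x) = 0)]].

From HB Require Import structures.
From mathcomp Require Import all_boot all_algebra.
From mathcomp Require Import functions boolp.
Import GRing.Theory.
Local Open Scope ring_scope.

(* Everything follows from the defining identities by direct computation;
   the only non-obvious observation is that for (x, xi) in Z_0 the element
   xi(x) is invariant under the action of L0 ([Z0_invariant]): expanding
   xi([x, t]) in two ways (by the derivation rule and through xi o d = x . -)
   gives t . xi(x) = 0.  This kills delta{u, u}, while the braided Jacobi
   identity reduces, after expanding each term with the rules of Z_0, to a
   telescoping sum ([Z0_braid_jacobi]). *)

Set Implicit Arguments.

Section LinearMaps.
Variables (k : fieldType) (U V : lmodType k) (f : U -> V).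
Hypothesis f_lin : lin f.

Lemma lin0 : f 0 = 0.
Proof.
have f00 := f_lin 1 0 0; rewrite scaler0 addr0 scale1r in f00.
by apply: (@addrI _ (f 0)); rewrite addr0 -f00.
Qed.

Lemma linD x y : f (x + y) = f x + f y.
Proof. by have := f_lin 1 x y; rewrite !scale1r. Qed.

Lemma linZ a x : f (a *: x) = a *: f x.
Proof. by have := f_lin a x 0; rewrite !addr0 lin0 addr0. Qed.

Lemma linN x : f (- x) = - f x.
Proof. by rewrite -scaleN1r linZ scaleN1r. Qed.
End LinearMaps.

(* An alternating bilinear bracket is antisymmetric (in any characteristic). *)
Lemma lie_antisym (k : fieldType) (V : lmodType k) (br : V -> V -> V) :
  lie_alg br -> forall x y, br x y = - br y x.
Proof.
case=> _ _ [br_linl br_linr] br_alt _ x y.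
have linl z : lin (br ^~ z) by move=> a u v; exact: br_linl.
have linr z : lin (br z) by move=> a u v; exact: br_linr.
have := br_alt (x + y) I.
rewrite (linD (linl _)) !(linD (linr _)) !br_alt // add0r addr0.
by move/eqP; rewrite addr_eq0 => /eqP.
Qed.

Section Centre.
Variables (k : fieldType) (L1 L0 : lmodType k).
Variables (br1 : L1 -> L1 -> L1) (br0 : L0 -> L0 -> L0).
Variables (d : L1 -> L0) (act : L0 -> L1 -> L1).

Hypothesis lie1 : lie_alg br1.
Hypothesis lie0 : lie_alg br0.
Hypothesis d_lin : lin d.
Hypothesis act_linl :
  forall (a : k) x y z, act (a *: x + y) z = a *: act x z + act y z.
Hypothesis act_linr :
  forall (a : k) x y z, act z (a *: x + y) = a *: act z x + act z y.
Hypothesis act_br : forall x y a, act (br0 x y) a = act x (act y a) - act y (act x a).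
Hypothesis d_act : forall x a, d (act x a) = br0 x (d a).
Hypothesis peiffer : forall a b, act (d a) b = br1 a b.

Local Notation Z := (Z0 br0 d act).
Local Notation delta := (zdelta d act).
Local Notation bb := (@zbraid k L1 L0).

Lemma act_lin_left z : lin (act ^~ z).
Proof. by move=> a x y; exact: act_linl. Qed.

Lemma act_lin_right z : lin (act z).
Proof. by move=> a x y; exact: act_linr. Qed.

Lemma zdelta_in_Z0 c : Z (delta c).
Proof.
split=> /=.
- move=> a x y.
  by rewrite (linD (act_lin_left _)) (linZ (act_lin_left _)) opprD scalerN.
- by move=> t; rewrite (linN d_lin) d_act lie_antisym // opprK.
- by move=> a; rewrite peiffer lie_antisym // opprK.
- by move=> s t; rewrite act_br !(linN (act_lin_right _)) opprB opprK addrC.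
Qed.

Lemma Z0_subspace : subspace Z.
Proof.
case: lie0 => _ _ [br0_linl br0_linr] _ _.
split.
  split=> /=.
  - by move=> a x y; rewrite scaler0 addr0.
  - move=> t; have br0_lin : lin (br0 ^~ t) by move=> a x y; exact: br0_linl.
    by rewrite (lin0 d_lin) (lin0 br0_lin).
  - by move=> a; rewrite (lin0 (act_lin_left _)).
  - by move=> s t; rewrite !(lin0 (act_lin_right _)) subrr.
move=> a x y [xi_lin xi_d xi_da xi_br] [eta_lin eta_d eta_da eta_br].
(* Linear combinations in L0 x (L0 -> L1) are computed componentwise. *)
have -> : a *: x + y = (a *: x.1 + y.1, fun t => a *: x.2 t + y.2 t) by [].
split=> /=.
- move=> b s t; rewrite xi_lin eta_lin !scalerDr !scalerA mulrC addrACA.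
  by rewrite -scalerA.
- by move=> t; rewrite (linD d_lin) (linZ d_lin) xi_d eta_d br0_linl.
- by move=> b; rewrite xi_da eta_da act_linl.
- move=> s t; rewrite xi_br eta_br !(linD (act_lin_right _)).
  by rewrite !(linZ (act_lin_right _)) scalerBr opprD addrACA.
Qed.

Lemma zdelta_lin : lin delta.
Proof.
move=> a x y; congr pair; first exact: d_lin.
by apply: funext => t /=; rewrite act_linr opprD scalerN.
Qed.

(* The braiding is bilinear on Z_0; in the second variable this uses the
   linearity of the second component. *)
Lemma zbraid_bilinear : bilinear_on Z bb.
Proof.
split=> a x y z _ _ Zz; first by [].
by case: Zz => zeta_lin _ _ _; rewrite /zbraid /= zeta_lin.
Qed.

Lemma Z0_invariant u t : Z u -> act t (u.2 u.1) = 0.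
Proof.
case=> _ xi_d xi_da xi_br.
have := xi_br u.1 t; rewrite -xi_da xi_d => /eqP.
by rewrite -subr_eq0 opprB addrC subrK => /eqP.
Qed.

Lemma zbraid_delta_delta a b : bb (delta a) (delta b) = br1 a b.
Proof. by rewrite /zbraid /= peiffer lie_antisym // opprK. Qed.

Lemma zbraid_delta_swap a u : Z u -> bb (delta a) u + bb u (delta a) = 0.
Proof. by case=> _ _ xi_da _; rewrite /zbraid /= xi_da addNr. Qed.

Lemma zdelta_zbraid_diag u : Z u -> delta (bb u u) = 0.
Proof.
move=> Zu; case: (Zu) => _ xi_d _ _.
rewrite /zbraid /zdelta xi_d; case: lie0 => _ _ _ br0_alt _.
rewrite br0_alt //; congr pair.
by apply: funext => t /=; rewrite Z0_invariant // oppr0.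
Qed.

Lemma Z0_braid_jacobi u v w : Z u -> Z v -> Z w ->
  bb u (delta (bb v w)) + bb w (delta (bb u v)) + bb v (delta (bb w u)) = 0.
Proof.
move=> [_ xi_d _ xi_br] [eta_lin eta_d eta_da _] [_ zeta_d zeta_da _].
rewrite /zbraid /=.
have first_term : u.2 (d (v.2 w.1)) = v.2 (br0 u.1 w.1) - w.2 (br0 u.1 v.1).
  by rewrite eta_d xi_br -eta_da -zeta_da !xi_d.
have third_term : v.2 (d (w.2 u.1)) = - v.2 (br0 u.1 w.1).
  by rewrite zeta_d lie_antisym // (linN eta_lin).
by rewrite first_term xi_d third_term subrK subrr.
Qed.

Lemma Z0_lie : lie_on Z (fun u v => delta (bb u v)).
Proof.
have deltaD x y : delta (x + y) = delta x + delta y := linD zdelta_lin x y.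
split.
- exact: Z0_subspace.
- by move=> u v _ _; exact: zdelta_in_Z0.
- have [bb_linl bb_linr] := zbraid_bilinear.
  by split=> a x y z Zx Zy Zz; rewrite -zdelta_lin ?bb_linl ?bb_linr.
- exact: zdelta_zbraid_diag.
- move=> x y z Zx Zy Zz.
  rewrite -!deltaD -(lin0 zdelta_lin); congr delta.
  by rewrite -addrA [X in _ + X]addrC addrA; exact: Z0_braid_jacobi.
Qed.

Lemma centre_braided_xmod :
  braided_xmod_on Z (fun a b => bb (delta a) (delta b))
                    (fun u v => delta (bb u v)) delta bb.
Proof.
have bracket1 : (fun a b => bb (delta a) (delta b)) = br1.
  by apply: funext => a; apply: funext => b; exact: zbraid_delta_delta.
rewrite bracket1; split=> //.
- exact: Z0_lie.
- split=> //; [exact: zdelta_in_Z0 | exact: zdelta_lin |].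
  by move=> a b; rewrite -bracket1.
- exact: zbraid_bilinear.
- split=> //; [exact: zbraid_delta_delta | exact: zbraid_delta_swap |].
  exact: Z0_braid_jacobi.
Qed.
End Centre.

Theorem theorem4p3 (k : fieldType) (hk : (2%:R : k) != 0)
  (L1 L0 : lmodType k) (br1 : L1 -> L1 -> L1) (br0 : L0 -> L0 -> L0)
  (d : L1 -> L0) (act : L0 -> L1 -> L1) :
  crossed_module br1 br0 d act ->
  let Z := Z0 br0 d act in
  let delta := zdelta d act in
  let bb := @zbraid k L1 L0 in
  (forall c : L1, Z (delta c)) /\
  (forall a u, Z u -> bb (delta a) u + bb u (delta a) = 0) /\
  (forall u, Z u -> delta (bb u u) = 0) /\
  (forall u v w, Z u -> Z v -> Z w ->
     bb u (delta (bb v w)) + bb w (delta (bb u v)) + bb v (delta (bb w u)) = 0) /\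
  braided_xmod_on Z (fun a b => bb (delta a) (delta b))
                    (fun u v => delta (bb u v)) delta bb.
Proof.
case=> [[lie1 lie0] [d_lin _] [act_linl act_linr] [act_br _] [d_act peiffer]].
move=> Z delta bb.
split; first exact: (zdelta_in_Z0 act
  lie1 lie0 d_lin act_linl act_linr act_br d_act peiffer).
split; first exact: zbraid_delta_swap.
split; first exact: (zdelta_zbraid_diag lie0).
split; first exact: (Z0_braid_jacobi lie0).
exact: (centre_braided_xmod act
  lie1 lie0 d_lin act_linl act_linr act_br d_act peiffer).
Qed.
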